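(* Let $n,b$ be integers with $1<n<b$. The $(n,b)$-Hoey-Sloane graph $\Gamma$ is symmetric, i.e. $\Gamma=\overline{\Gamma}$ as edge-labelled graphs.
   Context: Let $\lambda(x)$ denote the least non-negative residue of $x$ modulo $b$. The $(n,b)$-mother graph $M$ is the directed graph on vertex set $\{0,\ldots,b-1\}$ whose edges are the ordered pairs of digits $(d_1,d_2)$ with $\lambda(d_1+(b-n)d_2)\le n-1$. The $(n,b)$-Hoey-Sloane graph $\Gamma$ is the edge-labelled directed graph with vertex set $\{0,\ldots,n-1\}$ in which $(c_1,c_2)$ is an edge precisely when the set $\{(d_1,d_2)\in E(M) \mid n d_2-d_1+c_1=b c_2\}$ is nonempty, this set being its collection of edge labels. For a state $c$ write $\overline{c}=n-1-c$ and for a digit $d$ write $\overline{d}=b-1-d$. For an edge-labelled subgraph $\Gamma_0$ of $\Gamma$, its reflection $\overline{\Gamma}_0$ is the edge-labelled graph whose vertices are the $\overline{c}$ for vertices $c$ of $\Gamma_0$, whose edges are the $(\overline{c}_1,\overline{c}_2)$ for edges $(c_1,c_2)$ of $\Gamma_0$, and in which $(\overline{d}_1,\overline{d}_2)$ is a label of $(\overline{c}_1,\overline{c}_2)$ whenever $(d_1,d_2)$ is a label of $(c_1,c_2)$ in $\Gamma_0$. $\Gamma_0$ is symmetric if $\Gamma_0=\overline{\Gamma}_0$. *)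

From mathcomp Require Import all_boot all_algebra.
Set Implicit Arguments. Unset Strict Implicit. Unset Printing Implicit Defensive.
Import GRing.Theory.

Definition lam (b x : nat) : nat := x %% b.

Definition is_digit (b d : nat) : bool := d < b.
Definition is_state (n c : nat) : bool := c < n.

(* edges of the (n,b)-mother graph (n < b so b - n is the honest difference) *)
Definition mother_edge (n b d1 d2 : nat) : bool :=
  [&& is_digit b d1, is_digit b d2 & lam b (d1 + (b - n) * d2) <= n - 1].

Definition hs_label (n b c1 c2 d1 d2 : nat) : bool :=
  [&& is_state n c1, is_state n c2, mother_edge n b d1 d2 &
      ((n * d2)%:Z - d1%:Z + c1%:Z == (b * c2)%:Z)%R].

Definition hs_edge (n b c1 c2 : nat) : Prop :=
  is_state n c1 /\ is_state n c2 /\ exists d1 d2, hs_label n b c1 c2 d1 d2.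

Definition cbar (n c : nat) : nat := n - 1 - c.
Definition dbar (b d : nat) : nat := b - 1 - d.

Definition refl_vertex (n c : nat) : Prop :=
  exists c0, is_state n c0 /\ c = cbar n c0.
Definition refl_edge (n b c1 c2 : nat) : Prop :=
  exists e1 e2, hs_edge n b e1 e2 /\ c1 = cbar n e1 /\ c2 = cbar n e2.
Definition refl_label (n b c1 c2 d1 d2 : nat) : Prop :=
  exists e1 e2 f1 f2, hs_label n b e1 e2 f1 f2 /\
    c1 = cbar n e1 /\ c2 = cbar n e2 /\ d1 = dbar b f1 /\ d2 = dbar b f2.

Definition hs_symmetric (n b : nat) : Prop :=
  (forall c, is_state n c <-> refl_vertex n c) /\
  (forall c1 c2, hs_edge n b c1 c2 <-> refl_edge n b c1 c2) /\
  (forall c1 c2 d1 d2, hs_label n b c1 c2 d1 d2 <-> refl_label n b c1 c2 d1 d2).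

From mathcomp Require Import all_boot all_algebra.
From mathcomp Require Import zify.

Set Implicit Arguments.
Unset Strict Implicit.
Unset Printing Implicit Defensive.

(* Reflection d |-> b - 1 - d, c |-> n - 1 - c is an involution preserving
   every label.  The linear condition n d2 - d1 + c1 = b c2 reflects to
   itself subtracted from b (n - 1).  For the mother graph, the two sums
   x = d1 + (b - n) d2 and its reflection x' add up to n - 1 modulo b, so
   lambda(x) <= n - 1 forces lambda(x') = n - 1 - lambda(x) <= n - 1. *)

Lemma modnD_complement (b x y r : nat) :
  (x + y) %% b = r -> x %% b <= r -> y %% b = r - x %% b.
Proof.
move=> xy_r; have [b0|b_gt0] := posnP b.
  by rewrite b0 !modn0 in xy_r *; lia.
rewrite -modnDm in xy_r.
have := ltn_pmod x b_gt0; have := ltn_pmod y b_gt0.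
move: xy_r; set u := x %% b; set v := y %% b => uv_r v_lt u_lt u_le.
have [uv_lt|uv_ge] := ltnP (u + v) b; first by rewrite modn_small in uv_r; lia.
by move: uv_r; rewrite -(subnK uv_ge) modnDr modn_small; lia.
Qed.

Lemma cbarK n c : is_state n c -> cbar n (cbar n c) = c.
Proof. by rewrite /is_state /cbar; lia. Qed.

Lemma dbarK b d : is_digit b d -> dbar b (dbar b d) = d.
Proof. by rewrite /is_digit /dbar; lia. Qed.

Lemma cbar_state n c : is_state n c -> is_state n (cbar n c).
Proof. by rewrite /is_state /cbar; lia. Qed.

Lemma dbar_digit b d : is_digit b d -> is_digit b (dbar b d).
Proof. by rewrite /is_digit /dbar; lia. Qed.

Lemma is_state_refl n c : is_state n c <-> refl_vertex n c.
Proof.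
split=> [c_st | [c0 [c0_st ->]]]; last exact: cbar_state.
by exists (cbar n c); rewrite cbarK // cbar_state.
Qed.

Lemma hs_label_bounds n b c1 c2 d1 d2 : hs_label n b c1 c2 d1 d2 ->
  [/\ is_state n c1, is_state n c2, is_digit b d1 & is_digit b d2].
Proof. by case/and4P=> ? ? /and3P[? ? _] _. Qed.

Lemma hs_edgeP n b c1 c2 :
  hs_edge n b c1 c2 <-> exists d1 d2, hs_label n b c1 c2 d1 d2.
Proof.
split=> [[_ [_ //]] | [d1 [d2 lab]]].
by case/hs_label_bounds: (lab) => ? ? _ _; split; last split; last exists d1, d2.
Qed.

Section Reflection.

Variables n b : nat.
Hypotheses (n_gt0 : 0 < n) (n_leb : n <= b).

Lemma mother_sum_dbar d1 d2 : is_digit b d1 -> is_digit b d2 ->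
  d1 + (b - n) * d2 + (dbar b d1 + (b - n) * dbar b d2) = (b - n) * b + (n - 1).
Proof. by rewrite /is_digit /dbar; nia. Qed.

Lemma mother_edge_dbar d1 d2 :
  mother_edge n b d1 d2 -> mother_edge n b (dbar b d1) (dbar b d2).
Proof.
case/and3P=> d1_dig d2_dig; rewrite /mother_edge /lam !dbar_digit //= => le_nm1.
have sum_mod : (d1 + (b - n) * d2 + (dbar b d1 + (b - n) * dbar b d2)) %% b = n - 1.
  by rewrite mother_sum_dbar // modnMDl modn_small //; lia.
by rewrite (modnD_complement sum_mod le_nm1) leq_subr.
Qed.

Lemma hs_label_bar c1 c2 d1 d2 : hs_label n b c1 c2 d1 d2 ->
  hs_label n b (cbar n c1) (cbar n c2) (dbar b d1) (dbar b d2).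
Proof.
case/and4P=> c1_st c2_st mom /eqP eq_lin.
rewrite /hs_label !cbar_state ?mother_edge_dbar //=; apply/eqP.
case/and3P: mom => d1_dig d2_dig _.
move: c1_st c2_st d1_dig d2_dig eq_lin; rewrite /is_state /is_digit /cbar /dbar.
nia.
Qed.

Lemma hs_label_refl c1 c2 d1 d2 :
  hs_label n b c1 c2 d1 d2 <-> refl_label n b c1 c2 d1 d2.
Proof.
split=> [lab | [e1 [e2 [f1 [f2 [lab [-> [-> [-> ->]]]]]]]]]; last exact: hs_label_bar.
case/hs_label_bounds: (lab) => c1_st c2_st d1_dig d2_dig.
exists (cbar n c1), (cbar n c2), (dbar b d1), (dbar b d2).
by rewrite !cbarK ?dbarK //; split=> //; apply: hs_label_bar.
Qed.

Lemma hs_edge_bar c1 c2 : hs_edge n b c1 c2 -> hs_edge n b (cbar n c1) (cbar n c2).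
Proof.
by case/hs_edgeP=> d1 [d2 /hs_label_bar lab]; apply/hs_edgeP; exists (dbar b d1), (dbar b d2).
Qed.

Lemma hs_edge_refl c1 c2 : hs_edge n b c1 c2 <-> refl_edge n b c1 c2.
Proof.
split=> [edge | [e1 [e2 [edge [-> ->]]]]]; last exact: hs_edge_bar.
have [c1_st [c2_st _]] := edge.
by exists (cbar n c1), (cbar n c2); rewrite !cbarK //; split=> //; apply: hs_edge_bar.
Qed.

End Reflection.

Theorem corollary12 (n b : nat) (h1n : 1 < n) (hnb : n < b) : hs_symmetric n b.
Proof.
have n_gt0 : 0 < n by apply: ltnW.
have n_leb : n <= b by apply: ltnW.
split; first exact: is_state_refl.
split=> *; [exact: hs_edge_refl | exact: hs_label_refl].
Qed.
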